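(* Let $B$ be a board with set of sinks $S$ and let $k\ge 1$. If the extended full tilt graph $\hat G_F(B^{(k)})$ of the $k$-scaled board (with sinks the sub-pixels of sinks of $S$) contains an arborescence of weight $w$ converging to its root, then the extended full tilt graph $\hat G_F(B)$ (with sinks $S$) contains an arborescence of weight at most $w$ converging to its root.
   Context: Pixels are unit squares indexed by $\mathbb{Z}^2$. A board $B=(V,E)$ is a finite subgraph of the square grid graph on $\mathbb{Z}^2$. For a pixel $p$, its row (column) segment is the maximal set of pixels reachable from $p$ using only horizontal (vertical) edges; $p^\ell,p^r$ are the leftmost/rightmost pixels of its row segment and $p^u,p^d$ the topmost/bottommost pixels of its column segment. The full tilt graph of a board has its pixels as vertices and edges $(p,p^x)$ for $x\in\{\ell,r,u,d\}$, $p^x\ne p$. The $k$-scaled board $B^{(k)}$ replaces each pixel $(i,j)\in V$ by the $k\times k$ sub-pixels $(ki+a,kj+b)$, $0\le a,b<k$, with adjacent sub-pixels of the same pixel joined by edges and adjacent sub-pixels of different pixels $p,p'$ joined iff $\{p,p'\}\in E$; its sinks are all sub-pixels of sinks of $B$. Extended graph: for a directed graph $G$ with sinks $S$, $\hat G$ has vertex set $V(G)\cup\{r\}$ with new root $r$ and edges: every edge of $G$ with weight $0$; for every edge $(p,q)$ of $G$ with $(q,p)$ not an edge of $G$, the inverse edge $(q,p)$ with weight $1$; and $(s,r)$ with weight $0$ for $s\in S$. An arborescence converging to $r$ is a spanning subgraph in which every vertex other than $r$ has exactly one outgoing edge and a directed path to $r$; its weight is the sum of its edge weights. *)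

From mathcomp Require Import all_boot all_order all_algebra.
Set Implicit Arguments. Unset Strict Implicit. Unset Printing Implicit Defensive.
Import Order.TTheory GRing.Theory Num.Theory.
Local Open Scope ring_scope.

(* Pixels are elements of Z^2, written (x, y): x is the horizontal
   (column) coordinate, y the vertical (row) coordinate. *)
Definition pixel := (int * int)%type.

(* Every edge of the grid graph is
   either horizontal {(x,y),(x+1,y)} or vertical {(x,y),(x,y+1)}; we record
   it by its lower-left endpoint:
     bH p  <=> {p, p + (1,0)} is an edge,
     bVe p <=> {p, p + (0,1)} is an edge. *)
Record board := Board {
  bV  : seq pixel;
  bH  : pred pixel;
  bVe : pred pixel }.

Definition right_of (p : pixel) : pixel := (p.1 + 1, p.2).
Definition up_of (p : pixel) : pixel := (p.1, p.2 + 1).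

Definition wf_board (B : board) : Prop :=
  [/\ uniq (bV B),
      (forall p, bH B p -> (p \in bV B) && (right_of p \in bV B)) &
      (forall p, bVe B p -> (p \in bV B) && (up_of p \in bV B))].

(* The row segment of p (pixels reachable from p by
   horizontal edges) is the maximal horizontal run of consecutive horizontal
   edges through p.  [left_end B p q] : q = p^l ; etc. *)
Definition left_end (B : board) (p q : pixel) : bool :=
  [&& q.2 == p.2, q.1 <= p.1,
      all (fun i : nat => bH B (q.1 + i%:Z, p.2)) (iota 0 `|p.1 - q.1|%N)
    & ~~ bH B (q.1 - 1, p.2)].

Definition right_end (B : board) (p q : pixel) : bool :=
  [&& q.2 == p.2, p.1 <= q.1,
      all (fun i : nat => bH B (p.1 + i%:Z, p.2)) (iota 0 `|q.1 - p.1|%N)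
    & ~~ bH B q].

Definition down_end (B : board) (p q : pixel) : bool :=
  [&& q.1 == p.1, q.2 <= p.2,
      all (fun i : nat => bVe B (p.1, q.2 + i%:Z)) (iota 0 `|p.2 - q.2|%N)
    & ~~ bVe B (p.1, q.2 - 1)].

Definition up_end (B : board) (p q : pixel) : bool :=
  [&& q.1 == p.1, p.2 <= q.2,
      all (fun i : nat => bVe B (p.1, p.2 + i%:Z)) (iota 0 `|q.2 - p.2|%N)
    & ~~ bVe B q].

(* Full tilt graph: directed edges (p, p^x), x in {l,r,u,d}, p^x <> p. *)
Definition tilt_edge (B : board) (p q : pixel) : bool :=
  [&& p \in bV B, q != p &
      [|| left_end B p q, right_end B p q, down_end B p q | up_end B p q]].

(* Extended graph: vertices are [Some p] for pixels p of B, and the new root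
   r = [None].  [ext0] = weight-0 edges, [ext1] = weight-1 (inverse) edges. *)
Definition ext0 (B : board) (S : pred pixel) (u v : option pixel) : bool :=
  match u, v with
  | Some p, Some q => tilt_edge B p q
  | Some s, None => (s \in bV B) && S s
  | _, _ => false
  end.

Definition ext1 (B : board) (u v : option pixel) : bool :=
  match u, v with
  | Some q, Some p => tilt_edge B p q && ~~ tilt_edge B q p
  | _, _ => false
  end.

Definition ext_edge B S u v := ext0 B S u v || ext1 B u v.

Definition ext_weight B S u v : nat := if ext0 B S u v then 0%N else 1%N.

(* An arborescence converging to r is a spanning subgraph in which every
   non-root vertex has exactly one outgoing edge: encoded by the choice
   function [f] (the out-neighbour of each pixel), each vertex having a
   directed path to r. *)
Definition parent_step (f : pixel -> option pixel) (u : option pixel) :=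
  if u is Some p then f p else None.

Definition is_arborescence (B : board) (S : pred pixel)
    (f : pixel -> option pixel) : Prop :=
  forall p, p \in bV B ->
    ext_edge B S (Some p) (f p) /\
    exists n : nat, iter n (parent_step f) (Some p) = None.

Definition arb_weight (B : board) (S : pred pixel)
    (f : pixel -> option pixel) : nat :=
  (\sum_(p <- bV B) ext_weight B S (Some p) (f p))%N.

Definition sub_pixel (k : nat) (p : pixel) (a b : nat) : pixel :=
  (k%:Z * p.1 + a%:Z, k%:Z * p.2 + b%:Z).

Definition offsets (k : nat) : seq (nat * nat) :=
  [seq (a, b) | a <- iota 0 k, b <- iota 0 k].

Definition scale_board (k : nat) (B : board) : board :=
  {| bV := [seq sub_pixel k p ab.1 ab.2 | p <- bV B, ab <- offsets k];
     bH := fun q => has (fun p => has (fun ab =>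
              (q == sub_pixel k p ab.1 ab.2) &&
              (if (ab.1.+1 < k)%N then true else bH B p)) (offsets k)) (bV B);
     bVe := fun q => has (fun p => has (fun ab =>
              (q == sub_pixel k p ab.1 ab.2) &&
              (if (ab.2.+1 < k)%N then true else bVe B p)) (offsets k)) (bV B) |}.

Definition scale_sinks (k : nat) (B : board) (S : pred pixel) : pred pixel :=
  fun q => has (fun p => S p &&
             has (fun ab => q == sub_pixel k p ab.1 ab.2) (offsets k)) (bV B).

From mathcomp Require Import all_boot all_order all_algebra zify.
Import Order.TTheory GRing.Theory Num.Theory.
Local Open Scope ring_scope.
Set Implicit Arguments. Unset Strict Implicit.

(* Collapse every k x k block of the scaled board to its pixel.  Given an
   arborescence f of B^(k), let a pixel p point to the block containing the
   f-successor of a sub-pixel of p closest to the root.  That successor lies in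
   another block, being strictly closer to the root than every sub-pixel of p;
   and a tilt move of B^(k) that leaves a block ends in the block of the
   corresponding tilt move of B, because an end of a row or column segment of
   B^(k) lies in the block of the end of the matching segment of B.  So every
   pixel reaches the root (the minimal depth of its block decreases along the
   new edges), and each new edge weighs at most the edge of f it comes from,
   these edges of f having distinct sources. *)

(* A line is a predicate [h] on [int], [h z] meaning that [z] and [z + 1] are
   joined. *)
Definition run (h : pred int) (x y : int) : bool :=
  (x <= y) && all (fun i : nat => h (x + i%:Z)) (iota 0 `|y - x|%N).

Definition seg_left (h : pred int) (y x : int) : bool := run h x y && ~~ h (x - 1).
Definition seg_right (h : pred int) (y x : int) : bool := run h y x && ~~ h x.
Definition seg_end (h : pred int) (y x : int) : bool :=
  seg_left h y x || seg_right h y x.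

Lemma runP (h : pred int) (x y : int) :
  reflect (x <= y /\ forall z, x <= z < y -> h z) (run h x y).
Proof.
apply: (iffP andP) => -[le_xy hxy]; split=> //.
- move=> z /andP[le_xz lt_zy]; move/allP: hxy => /(_ `|z - x|%N).
  have -> : x + (`|z - x|%N)%:Z = z by lia.
  by apply; rewrite mem_iota; lia.
- by apply/allP => i; rewrite mem_iota => hi; apply: hxy; lia.
Qed.

Lemma seg_end_mem (h m : pred int) (y x : int) :
  (forall z, h z -> m z && m (z + 1)) -> x != y -> seg_end h y x -> m x.
Proof.
move=> hm neq_xy /orP[] /andP[/runP[le hxy] _].
- by have /hm/andP[] : h x by apply: hxy; lia.
- have /hm/andP[_] : h (x - 1) by apply: hxy; lia.
  by rewrite subrK.
Qed.

Section ScaledSegment.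

Variables (k : nat) (h m h' : pred int).
Hypothesis h_m : forall X, h X -> m X.
(* The edge from [k X + c] to [k X + c + 1] of the scaled line stays in block
   [X] unless [c = k - 1], where it is the edge from [X] to [X + 1]. *)
Hypothesis h'_scale : forall X (c : nat), (c < k)%N ->
  h' (k%:Z * X + c%:Z) = m X && ((c.+1 < k)%N || h X).

Let run_scale (P Q : int) (a c : nat) : (a < k)%N -> (c < k)%N ->
  run h' (k%:Z * P + a%:Z) (k%:Z * Q + c%:Z) -> P != Q ->
  P < Q /\ forall X, P <= X < Q -> h X.
Proof.
move=> lt_a lt_c /runP[le h'PQ] neq_PQ; have lt_PQ : P < Q by nia.
split=> // X rX; have : h' (k%:Z * X + k.-1%:Z) by apply: h'PQ; nia.
by rewrite h'_scale ?prednK ?ltnn /= ?leqnn; [case/andP | lia..].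
Qed.

Lemma seg_left_scale (P Q : int) (a c : nat) : (a < k)%N -> (c < k)%N ->
  P != Q -> seg_left h' (k%:Z * P + a%:Z) (k%:Z * Q + c%:Z) -> seg_left h P Q.
Proof.
move=> lt_a lt_c neq_PQ /andP[run_QP n_h'].
have [lt_QP hQP] := run_scale lt_c lt_a run_QP (contra_neq esym neq_PQ).
apply/andP; split; first by apply/runP; split; [lia | exact: hQP].
apply: contra n_h' => hQ1; case: c lt_c {run_QP} => [|c] lt_c.
- have -> : k%:Z * Q + 0%:Z - 1 = k%:Z * (Q - 1) + k.-1%:Z by lia.
  by rewrite h'_scale ?h_m ?hQ1 ?orbT //; lia.
- have -> : k%:Z * Q + c.+1%:Z - 1 = k%:Z * Q + c%:Z by lia.
  by rewrite h'_scale ?h_m ?hQP ?lexx ?orbT //; lia.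
Qed.

Lemma seg_right_scale (P Q : int) (a c : nat) : (a < k)%N -> (c < k)%N ->
  P != Q -> seg_right h' (k%:Z * P + a%:Z) (k%:Z * Q + c%:Z) -> seg_right h P Q.
Proof.
move=> lt_a lt_c neq_PQ /andP[run_PQ n_h'].
have [lt_PQ hPQ] := run_scale lt_a lt_c run_PQ neq_PQ.
apply/andP; split; first by apply/runP; split; [lia | exact: hPQ].
by apply: contra n_h' => hQ; rewrite h'_scale ?h_m ?hQ ?orbT.
Qed.

Lemma seg_end_scale (P Q : int) (a c : nat) : (a < k)%N -> (c < k)%N ->
  P != Q -> seg_end h' (k%:Z * P + a%:Z) (k%:Z * Q + c%:Z) -> seg_end h P Q.
Proof.
move=> lt_a lt_c neq_PQ /orP[/seg_left_scale | /seg_right_scale] e;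
  rewrite /seg_end e ?orbT //; exact: e.
Qed.

End ScaledSegment.

Lemma tilt_edgeE (B : board) (p q : pixel) :
  tilt_edge B p q =
  [&& p \in bV B, q != p &
      (q.2 == p.2) && seg_end (fun x => bH B (x, p.2)) p.1 q.1
   || (q.1 == p.1) && seg_end (fun y => bVe B (p.1, y)) p.2 q.2].
Proof.
case: p q => [x y] [x' y']; rewrite /tilt_edge /left_end /right_end /down_end /up_end.
rewrite /seg_end /seg_left /seg_right /run /=.
case: (y' =P y) => [->|_]; case: (x' =P x) => [->|_] //=;
  by rewrite ?orbF ?andbA // eqxx !andbF.
Qed.

Lemma tilt_edge_target (B : board) (p q : pixel) :
  wf_board B -> tilt_edge B p q -> q \in bV B.
Proof.
case: p q => [x y] [x' y'] [_ wfH wfV]; rewrite tilt_edgeE /= => /and3P[_ neq_qp].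
case/orP=> /andP[/eqP eq e]; subst.
- apply: (seg_end_mem (m := fun z => (z, y) \in bV B) _ _ e) => [z /wfH //|].
  by apply: contra neq_qp => /eqP->.
- apply: (seg_end_mem (m := fun z => (x, z) \in bV B) _ _ e) => [z /wfV //|].
  by apply: contra neq_qp => /eqP->.
Qed.

Lemma ext_edge_target (B : board) (S : pred pixel) (p q : pixel) :
  wf_board B -> ext_edge B S (Some p) (Some q) -> q \in bV B.
Proof.
move=> wfB /orP[/tilt_edge_target-> // | /andP[]].
by rewrite /tilt_edge => /andP[].
Qed.

Lemma leq_sum_mem (T : eqType) (s : seq T) (F : T -> nat) (x : T) :
  x \in s -> (F x <= \sum_(y <- s) F y)%N.
Proof. by move=> xs; rewrite (big_rem x) //= leq_addr. Qed.

Section Contraction.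

Variables (B B' : board) (S S' : pred pixel).
Variables (pi : pixel -> pixel) (fib : pixel -> seq pixel).
Hypothesis wfB : wf_board B.
Hypothesis bV_fib : bV B' = flatten [seq fib p | p <- bV B].
Hypothesis fib_pi : forall u, u \in fib (pi u).
Hypothesis pi_fib : forall p u : pixel, u \in fib p -> pi u = p.
Hypothesis fib_neq0 : forall p : pixel, p \in bV B -> fib p != [::].
Hypothesis pi_tilt : forall u t,
  tilt_edge B' u t -> pi u != pi t -> tilt_edge B (pi u) (pi t).
Hypothesis pi_sink : forall u : pixel, S' u -> S (pi u).

Lemma mem_fib_board p u : p \in bV B -> u \in fib p -> u \in bV B'.
Proof.
by move=> pB uf; rewrite bV_fib; apply/flattenP; exists (fib p) => //; apply: map_f.
Qed.

Lemma pi_board u : u \in bV B' -> pi u \in bV B.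
Proof. by rewrite bV_fib => /flattenP[_ /mapP[p pB ->] /pi_fib->]. Qed.

Lemma ext_edge_pi u v : u \in bV B' -> ext_edge B' S' (Some u) v ->
  omap pi v != Some (pi u) ->
  ext_edge B S (Some (pi u)) (omap pi v) /\
  (ext_weight B S (Some (pi u)) (omap pi v) <= ext_weight B' S' (Some u) v)%N.
Proof.
move=> uB' + neq_v; rewrite /ext_edge /ext_weight.
case: v neq_v => [t|] /=; last first.
  by rewrite !orbF => _ /andP[_ Su]; rewrite pi_board // pi_sink // uB' Su.
move=> neq_v; have neq_t : pi u != pi t by apply: contra_neq neq_v => ->.
case E0: (tilt_edge B' u t) => /=; first by rewrite pi_tilt.
move=> /andP[tu _]; rewrite (pi_tilt tu) 1?eq_sym //.
by split; [case: tilt_edge | case: ifP].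
Qed.

Variable f : pixel -> option pixel.
Hypothesis f_arb : is_arborescence B' S' f.

Let step := parent_step f.
(* Non-pixels satisfy [reach] vacuously, so that [depth] is total. *)
Let reach p n := (p \in bV B) ==> has (fun u => iter n step (Some u) == None) (fib p).

Let reach_exists p : exists n, reach p n.
Proof.
rewrite /reach; case: (boolP (p \in bV B)) => [pB|]; last by exists 0%N.
have [u uf] : exists u, u \in fib p.
  by case: (fib p) (fib_neq0 pB) => // u s _; exists u; rewrite mem_head.
have [_ [n un]] := f_arb (mem_fib_board pB uf).
by exists n; apply/hasP; exists u => //; apply/eqP.
Qed.

Let depth p := ex_minn (reach_exists p).
Let rep p := nth p (fib p) (find (fun u => iter (depth p) step (Some u) == None) (fib p)).
Let contract p := omap pi (f (rep p)).

Let depth_le p u n : u \in fib p -> iter n step (Some u) = None -> (depth p <= n)%N.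
Proof.
move=> uf un; rewrite /depth; case: ex_minnP => d _; apply.
by apply/implyP => _; apply/hasP; exists u => //; apply/eqP.
Qed.

Let rep_spec p : p \in bV B ->
  rep p \in fib p /\ iter (depth p) step (Some (rep p)) = None.
Proof.
move=> pB; have : reach p (depth p) by rewrite /depth; case: ex_minnP.
rewrite /reach pB /= => has_fib; split; first by rewrite mem_nth // -has_find.
exact/eqP/(nth_find p has_fib).
Qed.

Let depth_step p t : p \in bV B -> f (rep p) = Some t -> (depth (pi t) < depth p)%N.
Proof.
move=> pB ft; have [_] := rep_spec pB.
case: (depth p) => [|n] //; rewrite iterSr /step /= ft => tn.
by rewrite ltnS (depth_le (fib_pi t) tn).
Qed.

Let contract_edge p : p \in bV B ->
  ext_edge B S (Some p) (contract p) /\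
  (ext_weight B S (Some p) (contract p) <= ext_weight B' S' (Some (rep p)) (f (rep p)))%N.
Proof.
move=> pB; have [rep_f _] := rep_spec pB.
have rep_B' := mem_fib_board pB rep_f; have [e _] := f_arb rep_B'.
rewrite -{1 3}(pi_fib rep_f); apply: ext_edge_pi => //.
rewrite (pi_fib rep_f) /contract; case E: (f (rep p)) => [t|] //=.
by apply/eqP => -[pi_t]; have := depth_step pB E; rewrite pi_t ltnn.
Qed.

Let contract_reaches_root p : p \in bV B ->
  exists n, iter n (parent_step contract) (Some p) = None.
Proof.
have [n] := ubnP (depth p); elim: n p => // n IH p; rewrite ltnS => lt_p pB.
case E: (contract p) => [q|]; last by exists 1%N; rewrite /= E.
have [e _] := contract_edge pB; rewrite E in e.
have lt_q : (depth q < depth p)%N.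
  by move: E; rewrite /contract; case ft: (f (rep p)) => [t|] //= [<-]; apply: depth_step.
have [m qm] := IH q (leq_trans lt_q lt_p) (ext_edge_target wfB e).
by exists m.+1; rewrite iterSr /= E.
Qed.

Theorem arborescence_contract :
  exists g, is_arborescence B S g /\ (arb_weight B S g <= arb_weight B' S' f)%N.
Proof.
exists contract; split.
  by move=> p pB; split; [case: (contract_edge pB) | exact: contract_reaches_root].
rewrite /arb_weight bV_fib big_flatten big_map /=.
rewrite big_seq [X in (_ <= X)%N]big_seq; apply: leq_sum => p pB.
have [_ le_w] := contract_edge pB; apply: leq_trans le_w _.
by apply: leq_sum_mem; case: (rep_spec pB).
Qed.

End Contraction.

Definition coarse (k : nat) (u : pixel) : pixel := ((u.1 %/ k%:Z)%Z, (u.2 %/ k%:Z)%Z).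

Definition sub_pixels (k : nat) (p : pixel) : seq pixel :=
  [seq sub_pixel k p ab.1 ab.2 | ab <- offsets k].

Lemma divz_scale (k : nat) (X : int) (a : nat) : (a < k)%N ->
  ((k%:Z * X + a%:Z) %/ k%:Z)%Z = X.
Proof. by move=> lt_a; rewrite mulrC divzMDl ?divz_small ?addr0 //; lia. Qed.

Lemma scale_add_inj (k : nat) (X Y : int) (a c : nat) : (a < k)%N -> (c < k)%N ->
  k%:Z * X + a%:Z = k%:Z * Y + c%:Z -> X = Y /\ a = c.
Proof.
move=> lt_a lt_c e; have eXY : X = Y by rewrite -(divz_scale X lt_a) e divz_scale.
by split=> //; move: e; rewrite eXY => /addrI /eqP; rewrite eqz_nat => /eqP.
Qed.

Lemma coarse_sub_pixel (k : nat) (p : pixel) (a b : nat) : (a < k)%N -> (b < k)%N ->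
  coarse k (sub_pixel k p a b) = p.
Proof. by case: p => x y lt_a lt_b; rewrite /coarse /= !divz_scale. Qed.

Lemma mem_offsets (k : nat) (ab : nat * nat) :
  (ab \in offsets k) = (ab.1 < k)%N && (ab.2 < k)%N.
Proof.
case: ab => a b; apply/allpairsP/andP => /=.
- by case=> -[a' b'] /= [ha hb [-> ->]]; move: ha hb; rewrite !mem_iota.
- by case=> ha hb; exists (a, b); rewrite /= !mem_iota.
Qed.

Lemma sub_pixelsP (k : nat) (p u : pixel) :
  reflect (exists a b, [/\ (a < k)%N, (b < k)%N & u = sub_pixel k p a b])
          (u \in sub_pixels k p).
Proof.
apply: (iffP mapP) => [[[a b]] | [a [b [lt_a lt_b ->]]]].
- by rewrite mem_offsets => /andP[lt_a lt_b] ->; exists a, b.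
- by exists (a, b); rewrite // mem_offsets lt_a lt_b.
Qed.

Lemma coarse_sub_pixels (k : nat) (p u : pixel) : u \in sub_pixels k p -> coarse k u = p.
Proof. by case/sub_pixelsP=> a [b [lt_a lt_b ->]]; apply: coarse_sub_pixel. Qed.

Lemma sub_pixels_coarse (k : nat) (u : pixel) :
  (0 < k)%N -> u \in sub_pixels k (coarse k u).
Proof.
move=> k_gt0; have k_neq0 : k%:Z != 0 by rewrite eqz_nat -lt0n.
have k_pos : 0 < k%:Z by rewrite ltz_nat.
case: u => x y; apply/sub_pixelsP; exists `|(x %% k%:Z)%Z|%N, `|(y %% k%:Z)%Z|%N.
have := modz_ge0 x k_neq0; have := modz_ge0 y k_neq0.
have := ltz_pmod x k_pos; have := ltz_pmod y k_pos.
split; try lia.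
rewrite /sub_pixel /coarse /= !gez0_abs ?modz_ge0 //.
by rewrite ![k%:Z * _]mulrC -!divz_eq.
Qed.

Lemma sub_pixels_neq0 (k : nat) (p : pixel) : (0 < k)%N -> sub_pixels k p != [::].
Proof.
move=> k_gt0; have := sub_pixels_coarse (sub_pixel k p 0 0) k_gt0.
by rewrite coarse_sub_pixel //; case: (sub_pixels k p).
Qed.

Lemma has_sub_pixel (k : nat) (s : seq pixel) (F : pixel -> nat * nat -> bool)
    (p : pixel) (a b : nat) : (a < k)%N -> (b < k)%N ->
  has (fun q => has (fun ab => (sub_pixel k p a b == sub_pixel k q ab.1 ab.2) && F q ab)
                    (offsets k)) s = (p \in s) && F p (a, b).
Proof.
move=> lt_a lt_b; apply/hasP/andP => [[q qs /hasP[[a' b']]] | [ps Fp]].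
- rewrite mem_offsets /= => /andP[lt_a' lt_b'] /andP[/eqP e Fq].
  have eq_pq : p = q by rewrite -(coarse_sub_pixel p lt_a lt_b) e coarse_sub_pixel.
  subst q; move: e; rewrite /sub_pixel.
  by case=> /(scale_add_inj lt_a lt_a')[_ ->] /(scale_add_inj lt_b lt_b')[_ ->].
- by exists p => //; apply/hasP; exists (a, b); rewrite ?mem_offsets ?lt_a ?lt_b ?eqxx.
Qed.

Lemma bH_scale (k : nat) (B : board) (p : pixel) (a b : nat) : (a < k)%N -> (b < k)%N ->
  bH (scale_board k B) (sub_pixel k p a b) = (p \in bV B) && ((a.+1 < k)%N || bH B p).
Proof. exact: has_sub_pixel. Qed.

Lemma bVe_scale (k : nat) (B : board) (p : pixel) (a b : nat) : (a < k)%N -> (b < k)%N ->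
  bVe (scale_board k B) (sub_pixel k p a b) = (p \in bV B) && ((b.+1 < k)%N || bVe B p).
Proof. exact: has_sub_pixel. Qed.

Lemma scale_sinks_coarse (k : nat) (B : board) (S : pred pixel) (u : pixel) :
  scale_sinks k B S u -> S (coarse k u).
Proof.
case/hasP=> p _ /andP[Sp /hasP[[a b]]]; rewrite mem_offsets => /andP[lt_a lt_b] /eqP->.
by rewrite coarse_sub_pixel.
Qed.

Lemma tilt_edge_scale (k : nat) (B : board) (u t : pixel) : wf_board B -> (0 < k)%N ->
  tilt_edge (scale_board k B) u t -> coarse k u != coarse k t ->
  tilt_edge B (coarse k u) (coarse k t).
Proof.
move=> [_ wfH wfV] k_gt0; rewrite tilt_edgeE => /and3P[/flattenP[_ /mapP[P PB ->]]].
case/sub_pixelsP=> a [b [lt_a lt_b ->]] _.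
have /sub_pixelsP[c [d [lt_c lt_d]]] := sub_pixels_coarse t k_gt0.
move: (coarse k t) => Q ->; rewrite !coarse_sub_pixel // => e neq_PQ.
rewrite tilt_edgeE PB eq_sym neq_PQ /=.
move: neq_PQ; rewrite -pair_eqE /pair_eq negb_and => neq_PQ.
case/orP: e => /andP[/eqP e_y e].
- have [eQ _] := scale_add_inj lt_d lt_b e_y.
  apply/orP; left; rewrite eQ eqxx andTb.
  apply: (seg_end_scale (m := fun z => (z, P.2) \in bV B)
            (h' := fun z => bH (scale_board k B) (z, k%:Z * P.2 + b%:Z))
            _ _ lt_a lt_c _ e).
  + by move=> z /wfH /andP[].
  + by move=> X c' lt_c'; apply: (bH_scale B (X, P.2) lt_c' lt_b).
  + by rewrite eQ eqxx orbF in neq_PQ.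
- have [eQ _] := scale_add_inj lt_c lt_a e_y.
  apply/orP; right; rewrite eQ eqxx andTb.
  apply: (seg_end_scale (m := fun z => (P.1, z) \in bV B)
            (h' := fun z => bVe (scale_board k B) (k%:Z * P.1 + a%:Z, z))
            _ _ lt_b lt_d _ e).
  + by move=> z /wfV /andP[].
  + by move=> Y d' lt_d'; apply: (bVe_scale B (P.1, Y) lt_a lt_d').
  + by rewrite eQ eqxx in neq_PQ.
Qed.

Theorem mainTheorem9 (B : board) (S : pred pixel) (k w : nat) :
  wf_board B ->
  (forall s, S s -> s \in bV B) ->
  (1 <= k)%N ->
  (exists f, is_arborescence (scale_board k B) (scale_sinks k B S) f /\
             arb_weight (scale_board k B) (scale_sinks k B S) f = w) ->
  exists g, is_arborescence B S g /\ (arb_weight B S g <= w)%N.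
Proof.
(* Sinks off the board are harmless: a root edge needs its source on the board. *)
move=> wfB _ k_gt0 [f [f_arb <-]].
apply: (arborescence_contract (pi := coarse k) (fib := sub_pixels k) wfB _ _ _ _ _ _ f_arb).
- by [].
- by move=> u; apply: sub_pixels_coarse.
- exact: coarse_sub_pixels.
- by move=> p _; apply: sub_pixels_neq0.
- by move=> u t; apply: tilt_edge_scale.
- by move=> u; apply: scale_sinks_coarse.
Qed.
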